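(* Let $\mathcal{X}$ be an input space with metric $d$, let $\Theta$ be a parameter (hypothesis) space with metric $d$, and let $\mathcal{Y}$ be an output space which is a normed vector space with norm $\|\cdot\|$. Let $f:\mathcal{X}\times\Theta\to\mathcal{Y}$, $(x,\theta)\mapsto f(x;\theta)$, be a parameterized family of hypotheses, let $\theta^*\in\Theta$ and set $f^*(x)=f(x;\theta^* )$. Let $\mathcal{L}:\mathcal{Y}\times\mathcal{X}\to\mathbb{R}$ be a loss function, and for a probability distribution $r$ on $\mathcal{X}$ define the error $e(\theta,r)=\mathbb{E}_{x\sim r}[\mathcal{L}(f(x;\theta),x)]$. Let $p$ (test distribution) and $q$ (training distribution) be probability distributions on $\mathcal{X}$, let $W(p,q)$ be their 1-Wasserstein distance with respect to $d$, and let $\Theta_q=\{\theta\in\Theta : e(\theta,q)=0\}$. Let $\theta$ be a random variable with some probability distribution on $\Theta$ such that $\mathbb{P}(\theta\in\Theta_q)>0$, and for $\varepsilon>0$ define the inductive bias complexity $$\tilde I=-\log \mathbb{P}\big(e(\theta,p)\le\varepsilon \mid e(\theta,q)=0\big).$$ Suppose that: (i) $\mathcal{L}(y,x)\ge 0$ for all $y,x$, with equality if and only if $y=f^*(x)$; (ii) $\mathcal{L}(y+f^*(x_2)-f^*(x_1),x_2)=\mathcal{L}(y,x_1)$ for all $y\in\mathcal{Y}$, $x_1,x_2\in\mathcal{X}$; (iii) there is a constant $L_{\mathcal{L}}$ with $\mathcal{L}(y+\delta,x)-\mathcal{L}(y,x)\le L_{\mathcal{L}}\|\delta\|$ for all $y,\delta\in\mathcal{Y}$,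 $x\in\mathcal{X}$; (iv) there is a constant $L_f$ with $\|f(x_1;\theta_1)-f(x_1;\theta_2)-f(x_2;\theta_1)+f(x_2;\theta_2)\|\le L_f\, d(x_1,x_2)\, d(\theta_1,\theta_2)$ for all $x_1,x_2\in\mathcal{X}$, $\theta_1,\theta_2\in\Theta$. Then $$\tilde I\le -\log \mathbb{P}\left(d(\theta,\theta^* )\le \frac{\varepsilon}{L_{\mathcal{L}}L_f W(p,q)} \;\middle|\; \theta\in\Theta_q\right).$$
   Context: The ratio $\varepsilon/(L_{\mathcal{L}}L_fW(p,q))$ is interpreted as $+\infty$ if its denominator is $0$. All expectations are assumed to exist. $\log$ denotes the logarithm (any fixed base). *)

From HB Require Import structures.
From mathcomp Require Import all_boot all_order all_algebra.
From mathcomp Require Import all_classical all_reals all_analysis.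
Set Implicit Arguments. Unset Strict Implicit. Unset Printing Implicit Defensive.
Import Order.TTheory GRing.Theory Num.Theory.
Import numFieldNormedType.Exports.
Local Open Scope classical_set_scope.
Local Open Scope ring_scope.

Definition is_metric {R : realType} {T : Type} (d : T -> T -> R) : Prop :=
  (forall x y, 0 <= d x y) /\
  (forall x y, d x y = 0 <-> x = y) /\
  (forall x y, d x y = d y x) /\
  (forall x y z, d x z <= d x y + d y z).

Definition err {R : realType} {dX} {X : measurableType dX} {Th Y : Type}
  (L : Y -> X -> R) (f : X -> Th -> Y) (t : Th) (r : probability X R) : \bar R :=
  (\int[r]_x (L (f x t) x)%:E)%E.

Definition coupling {R : realType} {dX} {X : measurableType dX}
  (p q : probability X R) (g : probability (X * X)%type R) : Prop :=
  forall A : set X, measurable A ->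
    g (A `*` setT) = p A /\ g (setT `*` A) = q A.

Definition wasserstein {R : realType} {dX} {X : measurableType dX}
  (d : X -> X -> R) (p q : probability X R) : \bar R :=
  ereal_inf [set (\int[g]_z (d z.1 z.2)%:E)%E | g in [set g | coupling p q g]].

Definition condprob {R : realType} {dT} {T : measurableType dT}
  (P : probability T R) (A B : set T) : R :=
  fine (P (A `&` B)) / fine (P B).

Definition neglog {R : realType} (b a : R) : \bar R :=
  if a == 0 then +oo%E else (- (ln a / ln b))%:E.

Definition ib_ratio {R : realType} (eps : R) (D : \bar R) : \bar R :=
  if D == 0%E then +oo%E else (eps%:E / D)%E.

From HB Require Import structures.
From mathcomp Require Import all_boot all_order all_algebra.
From mathcomp Require Import all_classical all_reals all_analysis.
From mathcomp Require Import lra measurable_realfun.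
Import Order.TTheory GRing.Theory Num.Theory.
Import numFieldNormedType.Exports.
Local Open Scope classical_set_scope.
Local Open Scope ring_scope.

(** For a hypothesis [t], the shift invariance (ii), the Lipschitz bound (iii)
    and the mixed Lipschitz bound (iv) give the transport inequality
    [L(f(x1;t),x1) <= L(f(x2;t),x2) + LL Lf d(t,thstar) d(x1,x2)].
    Integrating it against a coupling of [p] and [q] and taking the infimum
    over couplings yields [e(t,p) <= e(t,q) + LL Lf d(t,thstar) W(p,q)].  When
    [e(t,q) = 0] and [t] lies in the ball of the statement the right-hand side
    is at most [eps], so the ball meets [Theta_q] inside [{e(t,p) <= eps}];
    conditional probabilities and [-log] are monotone. *)

Section marginals.
Context {R : realType} {d1 d2 : measure_display}.
Context {T : measurableType d1} {U : measurableType d2}.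
Local Open Scope ereal_scope.

Lemma ge0_integral_marginal (mu : {measure set T -> \bar R})
    (nu : {measure set U -> \bar R}) (phi : T -> U) (h : U -> \bar R) :
  measurable_fun setT phi ->
  (forall A, measurable A -> mu (phi @^-1` A) = nu A) ->
  measurable_fun setT h -> (forall y, 0 <= h y) ->
  \int[mu]_x h (phi x) = \int[nu]_y h y.
Proof.
move=> mphi munu mh h0.
rewrite [RHS](eq_measure_integral (pushforward mu phi)); last first.
  by move=> A mA _; rewrite -munu.
by rewrite [RHS]ge0_integral_pushforward // preimage_setT.
Qed.

End marginals.

Section couplings.
Context {R : realType} {dX : measure_display} {X : measurableType dX}.
Variables (p q : probability X R).
Local Open Scope ereal_scope.

Lemma integral_coupling_fst (g : probability (X * X)%type R) (h : X -> \bar R) :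
  coupling p q g -> measurable_fun setT h -> (forall x, 0 <= h x) ->
  \int[g]_z h z.1 = \int[p]_x h x.
Proof.
move=> pqg; apply: ge0_integral_marginal; first exact: measurable_fst.
by move=> A mA; rewrite -setXT; exact: (pqg A mA).1.
Qed.

Lemma integral_coupling_snd (g : probability (X * X)%type R) (h : X -> \bar R) :
  coupling p q g -> measurable_fun setT h -> (forall x, 0 <= h x) ->
  \int[g]_z h z.2 = \int[q]_x h x.
Proof.
move=> pqg; apply: ge0_integral_marginal; first exact: measurable_snd.
by move=> A mA; rewrite -setTX; exact: (pqg A mA).2.
Qed.

Lemma wasserstein_ge0 (d : X -> X -> R) :
  (forall x y, (0 <= d x y)%R) -> 0 <= wasserstein d p q.
Proof.
move=> d0; apply: le_ereal_inf_tmp => _ [g _ <-].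
by apply: integral_ge0 => z _; rewrite lee_fin.
Qed.

Lemma le_integral_probability_of_le_all (h h' : X -> \bar R) :
  measurable_fun setT h -> measurable_fun setT h' ->
  (forall x, 0 <= h x) -> (forall x, 0 <= h' x) ->
  (forall x1 x2, h x1 <= h' x2) ->
  \int[p]_x h x <= \int[q]_x h' x.
Proof.
move=> mh mh' h0 h'0 hh'.
have h_le x1 : h x1 <= \int[q]_x h' x.
  rewrite -[h x1]mule1 -(probability_setT q) -integral_cst //.
  by apply: ge0_le_integral => // y _; rewrite ?h0 ?hh'.
rewrite -[leRHS]mule1 -(probability_setT p) -integral_cst //.
by apply: ge0_le_integral.
Qed.

Variables (l : X -> R) (d : X -> X -> R) (c : R).
Hypotheses (ml : measurable_fun setT l)
  (md : measurable_fun setT (fun z : X * X => d z.1 z.2))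
  (l0 : forall x, (0 <= l x)%R) (d0 : forall x y, (0 <= d x y)%R)
  (c0 : (0 <= c)%R)
  (l_transfer : forall x1 x2, (l x1 <= l x2 + c * d x1 x2)%R).

Lemma le_integral_coupling (g : probability (X * X)%type R) :
  coupling p q g ->
  \int[p]_x (l x)%:E <= \int[q]_x (l x)%:E + c%:E * \int[g]_z (d z.1 z.2)%:E.
Proof.
move=> pqg.
have mlE : measurable_fun setT (EFin \o l) by exact/measurable_EFinP.
have mdE : measurable_fun setT (fun z : X * X => (d z.1 z.2)%:E).
  exact/measurable_EFinP.
have ml2 : measurable_fun setT (fun z : X * X => (l z.2)%:E).
  by apply/measurable_EFinP; apply: measurableT_comp => //;
    exact: measurable_snd.
rewrite -(integral_coupling_fst _ (fun x => (l x)%:E) pqg) //.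
rewrite -(integral_coupling_snd _ (fun x => (l x)%:E) pqg) //.
rewrite -ge0_integralZl_EFin //; last by move=> z _; rewrite lee_fin.
have mcd : measurable_fun setT (fun z : X * X => c%:E * (d z.1 z.2)%:E).
  by apply: emeasurable_funM => //; exact: measurable_cst.
apply: (@le_trans _ _ (\int[g]_z ((l z.2)%:E + c%:E * (d z.1 z.2)%:E))).
  apply: ge0_le_integral => //.
  - by move=> z _; rewrite lee_fin.
  - by apply/measurable_EFinP; apply: measurableT_comp => //;
      exact: measurable_fst.
  - exact: emeasurable_funD.
  - by move=> z _; rewrite -EFinM -EFinD lee_fin.
by rewrite ge0_integralD // => z _; rewrite -?EFinM lee_fin ?mulr_ge0.
Qed.

Lemma le_integral_wasserstein :
  \int[q]_x (l x)%:E \is a fin_num ->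
  \int[p]_x (l x)%:E <= \int[q]_x (l x)%:E + c%:E * wasserstein d p q.
Proof.
move=> ql_fin; move: c0; rewrite le_eqVlt => /predU1P[c_eq0|c_gt0].
  (* couplings are not assumed to exist, so [c = 0] is argued pointwise *)
  rewrite -c_eq0 mul0e adde0; apply: le_integral_probability_of_le_all.
  - exact/measurable_EFinP.
  - exact/measurable_EFinP.
  - by move=> x; rewrite lee_fin.
  - by move=> x; rewrite lee_fin.
  - move=> x1 x2; rewrite lee_fin.
    by have := l_transfer x1 x2; rewrite -c_eq0 mul0r addr0.
rewrite -leeBlDl // /wasserstein -ereal_inf_pZl //.
apply: le_ereal_inf_tmp => _ [_ [g pqg <-] <-].
by rewrite leeBlDl //; exact: le_integral_coupling.
Qed.

End couplings.

Section loss_transfer.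
Context {R : realType} {X Th : Type} {Y : normedModType R}.
Context {dx : X -> X -> R} {dth : Th -> Th -> R}.
Context {f : X -> Th -> Y} {thstar : Th} {L : Y -> X -> R} {LL Lf : R}.
Hypotheses (dx0 : forall x1 x2, 0 <= dx x1 x2)
  (L_shift : forall y x1 x2, L (y + f x2 thstar - f x1 thstar) x2 = L y x1)
  (L_lip : forall (y delta : Y) x, L (y + delta) x - L y x <= LL * `|delta|)
  (f_mixed_lip : forall x1 x2 t1 t2,
      `|f x1 t1 - f x1 t2 - f x2 t1 + f x2 t2| <= Lf * dx x1 x2 * dth t1 t2).

(* No sign is assumed on [LL] or [Lf], hence the positive part. *)
Lemma loss_transfer t x1 x2 :
  L (f x1 t) x1 <= L (f x2 t) x2 + Num.max 0 (LL * Lf * dth t thstar) * dx x1 x2.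
Proof.
set delta := f x1 t - f x1 thstar - f x2 t + f x2 thstar.
have shift : f x2 t + delta = f x1 t + f x2 thstar - f x1 thstar.
  rewrite /delta addrC -!addrA; congr (_ + _).
  by rewrite (addrC (f x2 thstar)) addKr addrC.
have lip : LL * `|delta| <= Num.max 0 (LL * Lf * dth t thstar) * dx x1 x2.
  have [LL_ge0|LL_lt0] := leP 0 LL.
    apply: le_trans (ler_wpM2l LL_ge0 (f_mixed_lip x1 x2 t thstar)) _.
    rewrite !mulrA [_ * dx x1 x2 * _]mulrAC.
    by rewrite ler_wpM2r // le_max lexx orbT.
  apply: (@le_trans _ _ 0); first by rewrite nmulr_rle0.
  by rewrite mulr_ge0 // le_max lexx.
have := L_lip (f x2 t) delta x2; rewrite shift L_shift; lra.
Qed.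

End loss_transfer.

Lemma mul_le_of_le_ib_ratio {R : realType} (eps k s : R) (W : \bar R) :
  0 <= eps -> 0 <= s -> (0 <= W)%E ->
  (s%:E <= ib_ratio eps (k%:E * W))%E ->
  ((Num.max 0 (k * s))%:E * W <= eps%:E)%E.
Proof.
move=> eps_ge0 s_ge0 W_ge0 s_le.
have [ks_le0|ks_gt0] := leP (k * s) 0.
  by rewrite mul0e lee_fin.
have s_gt0 : 0 < s.
  by rewrite lt_def s_ge0 andbT; apply: contraTneq ks_gt0 => ->; rewrite mulr0 ltxx.
have k_gt0 : 0 < k by rewrite -(pmulr_lgt0 _ s_gt0).
move: W W_ge0 s_le => [r r_ge0| _|//] s_le.
  rewrite lee_fin in r_ge0.
  have [->|r_neq0] := eqVneq r 0; first by rewrite mule0 lee_fin.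
  have kr_gt0 : 0 < k * r by rewrite mulr_gt0 // lt_def r_neq0.
  move: s_le; rewrite /ib_ratio -EFinM eqe (gt_eqF kr_gt0) -EFinM.
  rewrite inver (gt_eqF kr_gt0) -EFinM !lee_fin ler_pdivlMr // => s_le.
  by rewrite mulrAC mulrC.
move: s_le; rewrite /ib_ratio gt0_muley ?lte_fin //= invey mule0 lee_fin.
by rewrite leNgt s_gt0.
Qed.

Lemma condprob_ge0 {R : realType} {d} {T : measurableType d}
    (P : probability T R) (A B : set T) :
  0 <= condprob P A B.
Proof. by rewrite divr_ge0 // fine_ge0. Qed.

Lemma le_condprob {R : realType} {d} {T : measurableType d}
    (P : probability T R) (A A' B : set T) :
  measurable A -> measurable A' -> measurable B ->
  A `&` B `<=` A' `&` B -> condprob P A B <= condprob P A' B.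
Proof.
move=> mA mA' mB AB; rewrite ler_wpM2r ?invr_ge0 ?fine_ge0 //.
apply: fine_le; rewrite ?fin_num_measure //; try exact: measurableI.
by apply: le_measure => //; rewrite inE; exact: measurableI.
Qed.

Lemma le_neglog {R : realType} (b x y : R) :
  1 < b -> 0 <= y -> y <= x -> (neglog b x <= neglog b y)%E.
Proof.
move=> b_gt1 y_ge0 yx; rewrite /neglog.
have [_|y_neq0] := eqVneq y 0; first exact: leey.
have y_gt0 : 0 < y by rewrite lt_def y_neq0.
have x_gt0 := lt_le_trans y_gt0 yx.
rewrite (gt_eqF x_gt0) lee_fin lerN2 ler_pM2r ?invr_gt0 ?ln_gt0 //.
by rewrite ler_ln ?posrE.
Qed.

Theorem theorem1 (R : realType)
  (dX : measure_display) (X : measurableType dX)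
  (dT : measure_display) (Th : measurableType dT)
  (Y : normedModType R)
  (dx : X -> X -> R) (dth : Th -> Th -> R)
  (f : X -> Th -> Y) (thstar : Th) (L : Y -> X -> R)
  (p q : probability X R) (P : probability Th R)
  (b eps LL Lf : R)
  (hb : 1 < b) (heps : 0 < eps)
  (hdx : is_metric dx) (hdth : is_metric dth)
  (hdx_meas : measurable_fun setT (fun z : X * X => dx z.1 z.2))
  (hL_meas : forall t, measurable_fun setT (fun x => L (f x t) x))
  (hmeas_q : measurable [set t | err L f t q = 0%E])
  (hmeas_p : measurable [set t | (err L f t p <= eps%:E)%E])
  (hmeas_ball : measurable [set t | ((dth t thstar)%:E <=
        ib_ratio eps ((LL * Lf)%:E * wasserstein dx p q))%E])
  (hPq : (0 < P [set t | err L f t q = 0%E])%E)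
  (h1 : forall y x, 0 <= L y x /\ (L y x = 0 <-> y = f x thstar))
  (h2 : forall y x1 x2, L (y + f x2 thstar - f x1 thstar) x2 = L y x1)
  (h3 : forall (y delta : Y) x, L (y + delta) x - L y x <= LL * `|delta|)
  (h4 : forall x1 x2 t1 t2,
      `|f x1 t1 - f x1 t2 - f x2 t1 + f x2 t2| <= Lf * dx x1 x2 * dth t1 t2) :
  (neglog b (condprob P [set t | (err L f t p <= eps%:E)%E]
                      [set t | err L f t q = 0%E])
   <= neglog b (condprob P [set t | ((dth t thstar)%:E <=
                            ib_ratio eps ((LL * Lf)%:E * wasserstein dx p q))%E]
                         [set t | err L f t q = 0%E]))%E.
Proof.
set Aq := [set t | err L f t q = 0%E].
set Ap := [set t | (err L f t p <= eps%:E)%E].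
set Ball := [set t | ((dth t thstar)%:E <=
  ib_ratio eps ((LL * Lf)%:E * wasserstein dx p q))%E].
have [dx_ge0 _] := hdx; have [dth_ge0 _] := hdth.
have ball_sub : Ball `&` Aq `<=` Ap `&` Aq.
  move=> t [t_ball /= t_q]; split => //.
  have ql_fin : err L f t q \is a fin_num by rewrite t_q.
  have err_le : (err L f t p <= err L f t q +
      (Num.max 0 (LL * Lf * dth t thstar))%:E * wasserstein dx p q)%E.
    apply: le_integral_wasserstein => //.
    - by move=> x; exact: (h1 _ x).1.
    - by rewrite le_max lexx.
    - exact: loss_transfer dx_ge0 h2 h3 h4 t.
  rewrite t_q add0e in err_le; apply: le_trans err_le _.
  apply: mul_le_of_le_ib_ratio t_ball.
  - exact: ltW.
  - exact: dth_ge0.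
  - exact: wasserstein_ge0.
apply: le_neglog => //; first exact: condprob_ge0.
exact: le_condprob.
Qed.
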